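(* Consider Method 2.4 (described in the context), with a fixed $\varepsilon>0$, and suppose it does not terminate and the numbers $\delta_k>0$ satisfy $\delta_k\to0$. Then the sequences $\{x_k\},\{\sigma_k\}$ are defined for all $k\in K$ and $\lim_{k\to\infty}g(x_k)=f^*+\varepsilon$, $\lim_{k\to\infty}\sigma_k=f^*+\varepsilon$, where $g(x)=f(x)+\varepsilon$.
   Context: Setting: $D\subset\mathbb{R}^n$ closed convex; $f$ convex on $\mathbb{R}^n$ attaining its minimum $f^*$ on $D$; $X^*=\{x\in D:f(x)=f^*\}$; fixed $\varepsilon>0$, $g(x)=f(x)+\varepsilon$, $g^*=\min_Dg=f^*+\varepsilon$; $\operatorname{epi}(g,\mathbb{R}^n)=\{(x,\gamma):\gamma\ge g(x)\}$; $W^1(u,Q)=\{a\in\mathbb{R}^{n+1}:\|a\|=1,\ \langle a,v-u\rangle\le0\ \forall v\in Q\}$; $K=\{0,1,\dots\}$; $J=\{1,\dots,m\}$. Method 2.4: fix $x^*\in X^*$; choose $v^j\in\operatorname{int}\operatorname{epi}(g,\mathbb{R}^n)$, $j\in J$, a closed convex bounded $G_0\subset D$ with $x^*\in G_0$, a closed convex $M_0\subseteq\mathbb{R}^{n+1}$ with $\operatorname{epi}(g,\mathbb{R}^n)\subset M_0$, numbers $\delta_0>0$, $\bar\gamma_0\le g^*$, constant $q\ge1$; $i=k=0$. Step 1: $u_i=(y_i,\gamma_i)$ solves $\min\{\gamma:(x,\gamma)\in M_i,\ x\in G_i,\ \gamma\ge\bar\gamma_i\}$; if $\gamma_i=g(y_i)$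 stop. Step 2: for each $j\in J$ choose $\bar u_i^j$ in the open segment $(v^j,u_i)$ with $\bar u_i^j\notin\operatorname{int}\operatorname{epi}(g,\mathbb{R}^n)$ and $u_i+q_i^j(\bar u_i^j-u_i)\in\operatorname{epi}(g,\mathbb{R}^n)$ for some $q_i^j\in[1,q]$. Step 3: if $\|\bar u_i^j-u_i\|>\delta_k$ for all $j\in J$, choose closed convex $Q_i\subseteq M_i$ with $\operatorname{epi}(g,\mathbb{R}^n)\subset Q_i$ and go to Step 5. Step 4: choose closed convex $Q_i\supseteq\operatorname{epi}(g,\mathbb{R}^n)$; set $i_k=i$, $\sigma_k=\gamma_{i_k}$; choose $x_k\in G_{i_k}$ with $g(x_k)\le g(y_{i_k})$; choose $\delta_{k+1}>0$; $k\leftarrow k+1$. Step 5: for $j\in J$ choose nonempty finite $A_i^j\subset W^1(\bar u_i^j,\operatorname{epi}(g,\mathbb{R}^n))$; $M_{i+1}=Q_i\cap\bigcap_{j\in J}\{u\in\mathbb{R}^{n+1}:\langle a,u-\bar u_i^j\rangle\le0\ \forall a\in A_i^j\}$. Step 6: choose closed convex $G_{i+1}\subseteq G_0$ with $x^*\in G_{i+1}$ and $\bar\gamma_{i+1}\in[\bar\gamma_0,g^*]$; $i\leftarrow i+1$; go to Step 1. *)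

From HB Require Import structures.
From mathcomp Require Import all_boot all_order all_algebra.
From mathcomp Require Import all_classical all_reals all_analysis.
Set Implicit Arguments. Unset Strict Implicit. Unset Printing Implicit Defensive.
Import Order.TTheory GRing.Theory Num.Theory.
Import numFieldNormedType.Exports.
Local Open Scope classical_set_scope.
Local Open Scope ring_scope.

(* R^n is 'rV[R]_n ; R^{n+1} is represented as pairs (x, gamma) : 'rV[R]_n * R *)
Definition pt (R : realType) (n : nat) := ('rV[R]_n * R)%type.

Definition dotp (R : realType) (n : nat) (a b : pt R n) : R :=
  \sum_(i < n) a.1 ord0 i * b.1 ord0 i + a.2 * b.2.
Definition psub (R : realType) (n : nat) (a b : pt R n) : pt R n :=
  (a.1 - b.1, a.2 - b.2).
Definition pnorm (R : realType) (n : nat) (a : pt R n) : R :=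
  Num.sqrt (dotp a a).

Definition convex_setR (R : realType) (n : nat) (A : set 'rV[R]_n) : Prop :=
  forall x y t, A x -> A y -> 0 <= t <= 1 -> A (t *: x + (1 - t) *: y).
Definition convex_setP (R : realType) (n : nat) (A : set (pt R n)) : Prop :=
  forall p p' t, A p -> A p' -> 0 <= t <= 1 ->
    A (t *: p.1 + (1 - t) *: p'.1, t * p.2 + (1 - t) * p'.2).
Definition convex_fun (R : realType) (n : nat) (f : 'rV[R]_n -> R) : Prop :=
  forall x y t, 0 <= t <= 1 ->
    f (t *: x + (1 - t) *: y) <= t * f x + (1 - t) * f y.

Definition bounded_rV (R : realType) (n : nat) (A : set 'rV[R]_n) : Prop :=
  exists r : R, forall x, A x -> `|x| <= r.

Definition epi (R : realType) (n : nat) (g : 'rV[R]_n -> R) : set (pt R n) :=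
  [set p | g p.1 <= p.2].

Definition W1 (R : realType) (n : nat) (u : pt R n) (Q : set (pt R n)) : set (pt R n) :=
  [set a | pnorm a = 1 /\ forall v, Q v -> dotp a (psub v u) <= 0].

Definition pcomb (R : realType) (n : nat) (u w : pt R n) (t : R) : pt R n :=
  (u.1 + t *: (w.1 - u.1), u.2 + t * (w.2 - u.2)).

(* A non-terminating run of Method 2.4 applied to g = f + eps on D, with
   fixed x* = xs.  Iterations are indexed by i; the counter k at the start of
   iteration i is kk i.  Step 4 is executed at iteration i exactly when
   step4 i holds, i.e. some j has ||ubar_i^j - u_i|| <= delta_{kk i}.
   In that case i_{kk i} = i, sigma_{kk i} = gamma_i and x_{kk i} is chosen. *)
Definition method24_run (R : realType) (n : nat)
  (D : set 'rV[R]_n) (g : 'rV[R]_n -> R) (gstar : R) (xs : 'rV[R]_n)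
  (m : nat) (v : 'I_m -> pt R n) (q : R)
  (G : nat -> set 'rV[R]_n) (M : nat -> set (pt R n)) (delta : nat -> R)
  (gbar : nat -> R) (u : nat -> pt R n) (ubar : nat -> 'I_m -> pt R n)
  (qq : nat -> 'I_m -> R) (Q : nat -> set (pt R n))
  (A : nat -> 'I_m -> seq (pt R n)) (kk : nat -> nat)
  (x : nat -> 'rV[R]_n) (sigma : nat -> R) : Prop :=
  let E := epi g in
  let step4 i := exists j, pnorm (psub (ubar i j) (u i)) <= delta (kk i) in
  (forall j, (interior E) (v j)) /\
  closed (G 0) /\ convex_setR (G 0) /\ bounded_rV (G 0) /\ G 0 `<=` D /\ G 0 xs /\
  closed (M 0) /\ convex_setP (M 0) /\ E `<=` M 0 /\
  0 < delta 0 /\ gbar 0 <= gstar /\ 1 <= q /\ kk 0 = 0%N /\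
  (forall i,
    (* Step 1: u_i solves the auxiliary problem, and no stop *)
    [/\ M i (u i), G i (u i).1, gbar i <= (u i).2,
        (forall p, M i p -> G i p.1 -> gbar i <= p.2 -> (u i).2 <= p.2)
      & (u i).2 <> g (u i).1] /\
    (forall j, (exists t, 0 < t < 1 /\ ubar i j = pcomb (v j) (u i) t) /\
       ~ (interior E) (ubar i j) /\
       1 <= qq i j <= q /\ E (pcomb (u i) (ubar i j) (qq i j))) /\
    closed (Q i) /\ convex_setP (Q i) /\ E `<=` Q i /\
    (~ step4 i -> Q i `<=` M i /\ kk i.+1 = kk i) /\
    (step4 i -> sigma (kk i) = (u i).2 /\ G i (x (kk i)) /\
                g (x (kk i)) <= g (u i).1 /\ 0 < delta (kk i).+1 /\
                kk i.+1 = (kk i).+1) /\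
    (forall j, A i j != [::] /\ forall a, a \in A i j -> W1 (ubar i j) E a) /\
    M i.+1 = Q i `&` [set p | forall j a, a \in A i j ->
                                dotp a (psub p (ubar i j)) <= 0] /\
    closed (G i.+1) /\ convex_setR (G i.+1) /\ G i.+1 `<=` G 0 /\ G i.+1 xs /\
    gbar 0 <= gbar i.+1 <= gstar).

From HB Require Import structures.
From mathcomp Require Import all_boot all_order all_algebra.
From mathcomp Require Import all_classical all_reals all_analysis.
From mathcomp Require Import ring lra.
Import Order.TTheory GRing.Theory Num.Theory.
Import numFieldNormedType.Exports.
Local Open Scope classical_set_scope.
Local Open Scope ring_scope.
Set Implicit Arguments. Unset Strict Implicit. Unset Printing Implicit Defensive.

(* If Step 4 were executed only finitely often, then from some iteration on
   delta_k would be frozen at a value d > 0 and the sets M_i would decrease.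
   Every cut is made at a point of the segment [v_j, u_i] at distance > d from
   u_i, and v_j has a ball inside the epigraph, so the cut normal a separates
   u_i from all later u_i' by a fixed margin c(d) > 0; this contradicts the
   boundedness of (u_i).  Hence every level k is reached by an iteration i
   executing Step 4.  There the stretched point u_i + q_i^j (ubar_i^j - u_i) lies
   in the epigraph within q delta_k of u_i, and f is Lipschitz near the bounded
   set of the y_i, so with sigma_k = gamma_i we get
   gamma_i <= g* <= g(x_k) <= g(y_i) <= gamma_i + C delta_k. *)

Section Coordinates.
Variables (R : realType) (n : nat).
Implicit Types (p a b c w z : pt R n) (t r : R).

Definition pcoord p (k : 'I_n.+1) : R :=
  if unlift ord_max k is Some i then p.1 ord0 i else p.2.

Definition pt_of_pcoord (c : 'I_n.+1 -> R) : pt R n :=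
  (\row_i c (lift ord_max i), c ord_max).

Lemma pcoord_lift p i : pcoord p (lift ord_max i) = p.1 ord0 i.
Proof. by rewrite /pcoord liftK. Qed.

Lemma pcoord_max p : pcoord p ord_max = p.2.
Proof. by rewrite /pcoord unlift_none. Qed.

Lemma pcoordK (c : 'I_n.+1 -> R) k : pcoord (pt_of_pcoord c) k = c k.
Proof.
by case: (unliftP ord_max k) => [i ->|->]; rewrite ?pcoord_max // pcoord_lift mxE.
Qed.

Lemma pcoord_psub a b k : pcoord (psub a b) k = pcoord a k - pcoord b k.
Proof. by rewrite /pcoord; case: (unlift ord_max k) => [i|] //=; rewrite !mxE. Qed.

Lemma pcoord_pcomb w z t k :
  pcoord (pcomb w z t) k = pcoord w k + t * (pcoord z k - pcoord w k).
Proof. by rewrite /pcoord; case: (unlift ord_max k) => [i|] //=; rewrite !mxE. Qed.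

Lemma dotpE a b : dotp a b = \sum_k pcoord a k * pcoord b k.
Proof.
rewrite big_ord_recr /= !pcoord_max; congr (_ + _); apply: eq_bigr => i _.
have -> : widen_ord (leqnSn n) i = lift ord_max i.
  by apply/val_inj; rewrite /= /bump leqNgt ltn_ord.
by rewrite !pcoord_lift.
Qed.

Lemma dotp_psubr a b c : dotp a (psub b c) = dotp a b - dotp a c.
Proof.
by rewrite !dotpE -sumrB; apply: eq_bigr => k _; rewrite pcoord_psub mulrBr.
Qed.

Lemma dotp_pcomb_subl a w z t :
  dotp a (psub (pcomb w z t) w) = t * dotp a (psub z w).
Proof.
rewrite !dotpE mulr_sumr; apply: eq_bigr => k _.
by rewrite !pcoord_psub pcoord_pcomb; ring.
Qed.

Lemma dotp_pcomb_subr a w z t :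
  dotp a (psub z (pcomb w z t)) = (1 - t) * dotp a (psub z w).
Proof.
rewrite !dotpE mulr_sumr; apply: eq_bigr => k _.
by rewrite !pcoord_psub pcoord_pcomb; ring.
Qed.

Lemma dotpp_ge0 a : 0 <= dotp a a.
Proof. by rewrite dotpE; apply: sumr_ge0 => k _; rewrite -expr2 sqr_ge0. Qed.

Lemma pnorm1_dotpp a : pnorm a = 1 -> dotp a a = 1.
Proof. by move=> a1; rewrite -(sqr_sqrtr (dotpp_ge0 a)) -/(pnorm a) a1 expr1n. Qed.

Lemma pcoord_le_pnorm p k : `|pcoord p k| <= pnorm p.
Proof.
rewrite /pnorm -sqrtr_sqr ler_sqrt ?dotpp_ge0 // dotpE (bigD1 k) //= -expr2.
by rewrite lerDl; apply: sumr_ge0 => i _; rewrite -expr2 sqr_ge0.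
Qed.

Lemma pnorm_le p r : (forall k, `|pcoord p k| <= r) -> pnorm p <= n.+1%:R * r.
Proof.
move=> pr; have r0 : 0 <= r := le_trans (normr_ge0 _) (pr ord0).
rewrite /pnorm -[X in _ <= X]ger0_norm ?mulr_ge0 // -sqrtr_sqr.
rewrite ler_sqrt ?sqr_ge0 // dotpE (@le_trans _ _ (\sum_(k < n.+1) r ^+ 2)) //.
  apply: ler_sum => k _; rewrite -expr2 -real_normK ?num_real //.
  by rewrite lerXn2r ?nnegrE ?normr_ge0.
rewrite sumr_const card_ord exprMn -[_ *+ n.+1]mulr_natl ler_wpM2r ?sqr_ge0 //.
by rewrite -natrX ler_nat expnS leq_pmulr ?expn_gt0.
Qed.

Lemma dotp_le_pnorm1 a b r : pnorm a = 1 -> (forall k, `|pcoord b k| <= r) ->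
  dotp a b <= n.+1%:R * r.
Proof.
move=> a1 br; rewrite dotpE mulr_natl -[in X in _ <= X](card_ord n.+1) -sumr_const.
apply: ler_sum => k _; apply: le_trans (ler_norm _) _; rewrite normrM.
by rewrite -[r]mul1r ler_pM // -a1 pcoord_le_pnorm.
Qed.

Lemma interior_pcoord_ball (S : set (pt R n)) p : interior S p ->
  exists2 r, 0 < r & forall z, (forall k, `|pcoord z k - pcoord p k| < r) -> S z.
Proof.
move=> /nbhs_ballP [r r0 pS]; exists r => // z zr; apply: pS; split => /=.
  rewrite mx_norm_ball /ball_ /= [X in X < _]/Num.Def.normr /= mx_normrE.
  apply: bigmax_lt => // -[i j] _ /=; rewrite (ord1 i) !mxE.
  by rewrite -!pcoord_lift distrC zr.
by rewrite /ball /= -!pcoord_max distrC zr.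
Qed.

Lemma W1_dotp_ge_ball (E : set (pt R n)) w p r a : 0 < r ->
  (forall z, (forall k, `|pcoord z k - pcoord p k| < r) -> E z) ->
  W1 w E a -> r / 2 <= dotp a (psub w p).
Proof.
move=> r0 ballE [a1 aE].
pose z := pt_of_pcoord (fun k => pcoord p k + r / 2 * pcoord a k).
have Ez : E z.
  apply: ballE => k; rewrite pcoordK addrAC subrr add0r normrM ger0_norm; last lra.
  have ak1 : `|pcoord a k| <= 1 by rewrite -a1 pcoord_le_pnorm.
  by have := normr_ge0 (pcoord a k); nra.
have := aE z Ez.
have -> : dotp a (psub z w) = r / 2 * dotp a a - dotp a (psub w p).
  rewrite !dotpE mulr_sumr -sumrB; apply: eq_bigr => k _.
  by rewrite !pcoord_psub pcoordK; ring.
by rewrite pnorm1_dotpp //; lra.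
Qed.

Lemma segment_cut_depth (E : set (pt R n)) p z w t a r W d : 0 < r ->
  (forall y, (forall k, `|pcoord y k - pcoord p k| < r) -> E y) ->
  W1 w E a -> w = pcomb p z t -> 0 < t < 1 ->
  0 < W -> (forall k, `|pcoord z k - pcoord p k| <= W) ->
  0 <= d -> d < pnorm (psub w z) ->
  d / (n.+1%:R * W) * (r / 2) <= dotp a (psub z w).
Proof.
move=> r0 ballE aW wE /andP[t0 t1] W0 zW d0 dw.
have tS : r / 2 <= t * dotp a (psub z p).
  by rewrite -dotp_pcomb_subl -wE; exact: W1_dotp_ge_ball ballE aW.
have S_ge : r / 2 <= dotp a (psub z p).
  have S0 : 0 < dotp a (psub z p) by rewrite -(pmulr_rgt0 _ t0); lra.
  by apply: le_trans tS _; rewrite ler_piMl // ltW.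
have w_near : pnorm (psub w z) <= n.+1%:R * ((1 - t) * W).
  apply: pnorm_le => k; rewrite pcoord_psub wE pcoord_pcomb.
  have -> : pcoord p k + t * (pcoord z k - pcoord p k) - pcoord z k =
            - ((1 - t) * (pcoord z k - pcoord p k)) by ring.
  by rewrite normrN normrM ger0_norm ?ler_wpM2l //; lra.
have t_far : d / (n.+1%:R * W) <= 1 - t.
  rewrite ler_pdivrMr ?mulr_gt0 ?ltr0n //.
  by apply/ltW/(lt_le_trans dw); rewrite mulrCA.
rewrite wE dotp_pcomb_subr ler_pM //; last by lra.
by rewrite divr_ge0 // mulr_ge0 ?ler0n // ltW.
Qed.

End Coordinates.

Lemma mx_entry_le_norm (R : realType) n (y : 'rV[R]_n) i : `|y ord0 i| <= `|y|.
Proof.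
rewrite [X in _ <= X]/Num.Def.normr /= mx_normrE.
exact: (le_bigmax 0 (fun ij : 'I_1 * 'I_n => `|y ij.1 ij.2|) (ord0, i)).
Qed.

Lemma mx_norm_le_entries (R : realType) n (y : 'rV[R]_n) r : 0 <= r ->
  (forall i, `|y ord0 i| <= r) -> `|y| <= r.
Proof.
move=> r0 yr; rewrite [X in X <= _]/Num.Def.normr /= mx_normrE.
by apply: bigmax_le => // -[i j] _ /=; rewrite (ord1 i).
Qed.

Section ConvexFunction.
Variables (R : realType) (n : nat) (f : 'rV[R]_n -> R).
Hypothesis f_convex : convex_fun f.

Lemma convex_fun_le_max (y z : 'rV[R]_n) t : 0 <= t <= 1 ->
  f (t *: y + (1 - t) *: z) <= Num.max (f y) (f z).
Proof.
move=> /[dup] t01 /andP[t0 t1]; apply: le_trans (f_convex _ _ t01) _.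
have : t * f y <= t * Num.max (f y) (f z) by rewrite ler_wpM2l ?le_max ?lexx.
have : (1 - t) * f z <= (1 - t) * Num.max (f y) (f z).
  by rewrite ler_wpM2l ?subr_ge0 ?le_max ?lexx ?orbT.
lra.
Qed.

Lemma convex_fun_line_le_max (e : 'rV[R]_n) c s : 0 < c -> `|s| <= c ->
  f (s *: e) <= Num.max (f (c *: e)) (f ((- c) *: e)).
Proof.
move=> c0; rewrite ler_norml => /andP[sc cs].
set t := (s + c) / (2 * c).
have t01 : 0 <= t <= 1 by rewrite divr_ge0 ?ler_pdivrMr ?mulr_gt0 //=; lra.
have -> : s *: e = t *: (c *: e) + (1 - t) *: ((- c) *: e).
  by rewrite !scalerA -scalerDl; congr (_ *: _); rewrite /t; field; rewrite gt_eqF.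
exact: convex_fun_le_max.
Qed.

Lemma convex_fun_box_bounded_above k r : exists M, forall y : 'rV[R]_n,
  (forall i, `|y ord0 i| <= r) -> (forall i : 'I_n, (k <= i)%N -> y ord0 i = 0) ->
  f y <= M.
Proof.
elim: k r => [|k IH] r.
  exists (f 0) => y _ y0; suff -> : y = 0 by [].
  by apply/rowP => i; rewrite mxE y0.
have [kn|nk] := ltnP k n; last first.
  have [M HM] := IH r; exists M => y yr yk; apply: HM => // i ki.
  by have := leq_trans (ltn_ord i) nk; rewrite ltnNge ki.
pose ik := Ordinal kn; pose e : 'rV[R]_n := delta_mx 0 ik.
have [M1 HM1] := IH (2 * r); set c := 2 * `|r| + 1.
have c0 : 0 < c by rewrite /c ltr_pwDr ?mulr_ge0.
exists (Num.max M1 (Num.max (f (c *: e)) (f ((- c) *: e)))) => y yr yk.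
have r0 : 0 <= r := le_trans (normr_ge0 _) (yr ik).
have [y' y'E] : exists y' : 'rV[R]_n,
    forall i, y' ord0 i = if i == ik then 0 else y ord0 i.
  exists (y - y ord0 ik *: e) => i; rewrite !mxE /=.
  by case: eqP => [->|]; rewrite ?mulr1 ?subrr ?mulr0 ?subr0.
have -> : y = 2^-1 *: (2 *: y') + (1 - 2^-1) *: ((2 * y ord0 ik) *: e).
  apply/rowP => i; rewrite !mxE y'E /=.
  by case: eqP => [->|_] /=; rewrite ?mulr1 ?mulr0; field.
apply: le_trans (convex_fun_le_max _ _ _) _; first by apply/andP; split; lra.
apply: le_max2.
  apply: HM1 => i; rewrite mxE y'E.
    by case: eqP => _; rewrite ?mulr0 ?normr0 ?mulr_ge0 // normrM ger0_norm ?ler_wpM2l.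
  case: eqP => [_ _|ik_i ki]; first by rewrite mulr0.
  rewrite yk ?mulr0 // ltn_neqAle ki andbT; apply/eqP => ei.
  by apply: ik_i; apply/val_inj.
apply: convex_fun_line_le_max => //; rewrite normrM ger0_norm // /c.
by apply: le_trans (ler_wpM2l _ (le_trans (yr ik) (ler_norm r))) _; rewrite ?lerDl.
Qed.

Lemma convex_fun_bounded_above r : exists M, forall y : 'rV[R]_n, `|y| <= r -> f y <= M.
Proof.
have [M HM] := convex_fun_box_bounded_above n r; exists M => y yr; apply: HM.
  by move=> i; apply: le_trans (mx_entry_le_norm y i) yr.
by move=> i; rewrite leqNgt ltn_ord.
Qed.

Lemma convex_fun_bounded_below r : exists mn, forall y : 'rV[R]_n, `|y| <= r -> mn <= f y.
Proof.
have [M HM] := convex_fun_bounded_above r; exists (2 * f 0 - M) => y yr.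
have half01 : 0 <= (2^-1 : R) <= 1 by apply/andP; split; lra.
have := f_convex y (- y) half01.
have -> : 2^-1 *: y + (1 - 2^-1) *: - y = 0 :> 'rV[R]_n.
  by apply/rowP => i; rewrite !mxE; field.
by have := HM (- y); rewrite normrN => /(_ yr); lra.
Qed.

Lemma convex_fun_lipschitz_of_bounds B mn M :
  (forall y : 'rV[R]_n, `|y| <= B + 1 -> mn <= f y <= M) ->
  forall y z, `|y| <= B -> `|y - z| <= 1 -> f y <= f z + (M - mn) * `|y - z|.
Proof.
move=> fB y z yB yz1.
have [/eqP|yz0] := eqVneq (y - z) 0.
  by rewrite subr_eq0 => /eqP ->; rewrite subrr normr0 mulr0 addr0.
set d := `|y - z|; have d0 : 0 < d by rewrite normr_gt0.
have zB : `|z| <= B + 1.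
  have -> : z = y - (y - z) by rewrite opprB addrC subrK.
  by rewrite (le_trans (ler_normB _ _)) // lerD.
pose p := y + d^-1 *: (y - z).
have pB : `|p| <= B + 1.
  apply: le_trans (ler_normD _ _) _; apply: lerD => //.
  by rewrite normrZ ger0_norm ?invr_ge0 ?(ltW d0) // (mulVf (lt0r_neq0 d0)).
set lam := d / (1 + d).
have lam01 : 0 <= lam <= 1 by rewrite divr_ge0 ?ler_pdivrMr //=; lra.
have -> : y = lam *: p + (1 - lam) *: z.
  apply/rowP => i; rewrite /p /lam !mxE; field.
  by rewrite !gt_eqF ?addr_gt0.
apply: le_trans (f_convex _ _ lam01) _.
have /andP[mn_fp fp_M] := fB p pB; have /andP[mn_fz fz_M] := fB z zB.
have lam_d : lam <= d by rewrite /lam ler_pdivrMr; [nra | lra].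
have : lam * (f p - f z) <= lam * (M - mn) by rewrite ler_wpM2l //; lra.
have : lam * (M - mn) <= d * (M - mn) by rewrite ler_wpM2r //; lra.
nra.
Qed.

Lemma convex_fun_local_lipschitz B : exists2 L, 0 <= L & forall y z : 'rV[R]_n,
  `|y| <= B -> `|y - z| <= 1 -> f y <= f z + L * `|y - z|.
Proof.
have [M fM] := convex_fun_bounded_above (`|B| + 1).
have [mn mnf] := convex_fun_bounded_below (`|B| + 1).
have fB y : `|y| <= `|B| + 1 -> mn <= f y <= M by move=> yB; rewrite mnf ?fM.
exists (M - mn).
  have /andP[] : mn <= f 0 <= M by rewrite fB // normr0 addr_ge0.
  lra.
move=> y z yB; apply: (convex_fun_lipschitz_of_bounds fB).
exact: le_trans yB (ler_norm B).
Qed.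

End ConvexFunction.

Lemma floor_eq_dist_lt1 (R : realType) (a b : R) :
  Num.floor a = Num.floor b -> `|a - b| < 1.
Proof.
move=> ab; have := floor_itv a; have := floor_itv b; rewrite ab rmorphD /=.
by move=> /andP[? ?] /andP[? ?]; rewrite ltr_norml; apply/andP; split; lra.
Qed.

Lemma bounded_seq_close_pair (R : realType) (N : nat) (P : nat -> 'I_N -> R) B rho :
  0 < rho -> (forall l k, `|P l k| <= B) ->
  exists l1 l2, (l1 < l2)%N /\ forall k, `|P l1 k - P l2 k| < rho.
Proof.
move=> rho0 PB.
pose cell l k := Num.floor ((P l k + B) / rho).
pose K := (`|Num.floor (2 * B / rho)|%N).+1.
have cell_ge0 l k : 0 <= cell l k.
  rewrite floor_ge0 divr_ge0 ?(ltW rho0) //.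
  by have := PB l k; rewrite ler_norml => /andP[? ?]; lra.
have cell_lt l k : (`|cell l k|%N < K)%N.
  have /andP[lo hi] : 0 <= P l k + B <= 2 * B.
    by have := PB l k; rewrite ler_norml => /andP[? ?]; apply/andP; split; lra.
  have B2 : 0 <= 2 * B / rho by rewrite divr_ge0 ?(ltW rho0) //; lra.
  rewrite ltnS -lez_nat !gez0_abs ?cell_ge0 ?floor_ge0 //.
  by apply: le_floor; rewrite ler_pM2r ?invr_gt0.
(* Pigeonhole: there are more indices [l] than vectors of cells in ['I_K ^ N]. *)
pose F (l : 'I_#|{ffun 'I_N -> 'I_K}|.+1) : {ffun 'I_N -> 'I_K} :=
  [ffun k => inord `|cell l k|%N].
have [|] := pselect (exists l1 l2, l1 != l2 /\ F l1 = F l2); last first.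
  move=> F_inj; have /leq_card : injective F.
    by move=> a b Fab; have [//|ab] := eqVneq a b; case: F_inj; exists a, b.
  by rewrite card_ord ltnn.
move=> [l1 [l2 [l12 Fl12]]].
have near12 k : `|P l1 k - P l2 k| < rho.
  have := congr1 (fun h : {ffun 'I_N -> 'I_K} => val (h k)) Fl12.
  rewrite /F !ffunE /= !inordK // => /(congr1 Posz).
  rewrite !gez0_abs // => /floor_eq_dist_lt1 cells_close.
  have -> : P l1 k - P l2 k = ((P l1 k + B) / rho - (P l2 k + B) / rho) * rho.
    by field; rewrite gt_eqF.
  by rewrite normrM (gtr0_norm rho0) -[X in _ < X]mul1r ltr_pM2r.
have [lt12|lt21|eq12] := ltngtP l1 l2.
- by exists l1, l2.
- by exists l2, l1; split => // k; rewrite distrC.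
- by move: l12; rewrite (val_inj eq12) eqxx.
Qed.

Section Method24.
Variables (R : realType) (n : nat) (D : set 'rV[R]_n) (f : 'rV[R]_n -> R).
Variables (xs : 'rV[R]_n) (eps : R) (m : nat) (v : 'I_m -> pt R n) (q : R).
Variables (G : nat -> set 'rV[R]_n) (M : nat -> set (pt R n)) (delta : nat -> R).
Variables (gbar : nat -> R) (u : nat -> pt R n) (ubar : nat -> 'I_m -> pt R n).
Variables (qq : nat -> 'I_m -> R) (Q : nat -> set (pt R n)).
Variables (A : nat -> 'I_m -> seq (pt R n)) (kk : nat -> nat).
Variables (x : nat -> 'rV[R]_n) (sigma : nat -> R).

Local Notation gs := (f xs + eps).
Local Notation E := (epi (fun y => f y + eps)).
Local Notation step4 i := (exists j, pnorm (psub (ubar i j) (u i)) <= delta (kk i)).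

Hypothesis xs_min : forall y, D y -> f xs <= f y.
Hypothesis run : method24_run D (fun y => f y + eps) gs xs v q G M delta gbar u ubar
  qq Q A kk x sigma.
Hypothesis delta_gt0 : forall k, 0 < delta k.

Hypothesis m_gt0 : (0 < m)%N.

Local Ltac run_at i := case: run => _; do 12!case=> _; move=> /(_ i).

Lemma v_interior j : interior E (v j).
Proof. by case: run. Qed.

Lemma q_gt0 : 0 < q.
Proof.
by case: run => _ [_ [_ [_ [_ [_ [_ [_ [_ [_ [_ [/(lt_le_trans ltr01) + _]]]]]]]]]]].
Qed.

Lemma kk0 : kk 0 = 0%N.
Proof. by case: run => _ [_ [_ [_ [_ [_ [_ [_ [_ [_ [_ [_ [+ _]]]]]]]]]]]]. Qed.

Lemma epi_sub_M i : E `<=` M i.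
Proof.
elim: i => [|i IH] p Ep.
  by case: run => _ [_ [_ [_ [_ [_ [_ [_ [+ _]]]]]]]]; apply.
run_at i => -[_ [_ [_ [_ [EQ [_ [_ [AW [-> _]]]]]]]]]; split; first exact: EQ.
by move=> j a aA; have [_ /(_ a aA) [_]] := AW j; apply.
Qed.

Lemma G_sub_G0 i : G i `<=` G 0.
Proof.
case: i => [//|i].
by run_at i => -[_ [_ [_ [_ [_ [_ [_ [_ [_ [_ [_ [+ _]]]]]]]]]]]].
Qed.

Lemma G_sub_D i : G i `<=` D.
Proof. by case: run => _ [_ [_ [_ [G0D _]]]] y /G_sub_G0 /G0D. Qed.

Lemma xs_in_G i : G i xs.
Proof.
case: i => [|i]; first by case: run => _ [_ [_ [_ [_ [+ _]]]]].
by run_at i => -[_ [_ [_ [_ [_ [_ [_ [_ [_ [_ [_ [_ [+ _]]]]]]]]]]]]].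
Qed.

Lemma gbar_bounds i : gbar 0 <= gbar i <= gs.
Proof.
case: i => [|i]; last first.
  by run_at i => -[_ [_ [_ [_ [_ [_ [_ [_ [_ [_ [_ [_ [_ +]]]]]]]]]]]]].
by rewrite lexx; case: run => _ [_ [_ [_ [_ [_ [_ [_ [_ [_ [+ _]]]]]]]]]].
Qed.

Lemma u_in_M i : M i (u i).
Proof. by run_at i => -[[]]. Qed.

Lemma u1_in_G i : G i (u i).1.
Proof. by run_at i => -[[]]. Qed.

Lemma u2_bounds i : gbar 0 <= (u i).2 <= gs.
Proof.
have /andP[gb0 gbs] := gbar_bounds i.
run_at i => -[[_ _ gbu umin _] _]; rewrite (le_trans gb0 gbu) /=.
by apply: (umin (xs, gs)) => //; [apply: epi_sub_M; rewrite /epi /= | exact: xs_in_G].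
Qed.

Lemma gs_le_g y : D y -> gs <= f y + eps.
Proof. by move=> /xs_min; rewrite lerD2r. Qed.

Lemma u1_bounded : exists r, forall i, `|(u i).1| <= r.
Proof.
case: run => _ [_ [_ [[r G0r] _]]]; exists r => i.
exact/G0r/G_sub_G0/u1_in_G.
Qed.

Lemma u_pcoord_bounded : exists B, forall i k, `|pcoord (u i) k| <= B.
Proof.
have [r ur] := u1_bounded; exists (r + (`|gbar 0| + `|gs|)) => i k.
have r0 : 0 <= r := le_trans (normr_ge0 _) (ur 0%N).
case: (unliftP ord_max k) => [k' ->|->].
  rewrite pcoord_lift (le_trans (mx_entry_le_norm _ _)) //.
  by rewrite (le_trans (ur i)) // lerDl addr_ge0.
rewrite pcoord_max; have /andP[lo hi] := u2_bounds i.
have := ler_norm gs; have := ler_norm (- gbar 0); rewrite normrN ler_norml.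
by have := normr_ge0 gs; have := normr_ge0 (gbar 0); move=> *; apply/andP; split; lra.
Qed.

Lemma kk_succ i : step4 i -> kk i.+1 = (kk i).+1.
Proof. by move=> s4; run_at i => -[_ [_ [_ [_ [_ [_ [/(_ s4) [_ [_ [_ [_ ->]]]]]]]]]]]. Qed.

Lemma kk_stay i : ~ step4 i -> kk i.+1 = kk i.
Proof. by move=> ns4; run_at i => -[_ [_ [_ [_ [_ [/(_ ns4) [_ ->]]]]]]]. Qed.

Lemma M_succ_sub i : ~ step4 i -> M i.+1 `<=` M i.
Proof.
move=> ns4; run_at i => -[_ [_ [_ [_ [_ [/(_ ns4) [QM _] [_ [_ [-> _]]]]]]]]].
by move=> p [/QM].
Qed.

Lemma step4_record i : step4 i ->
  [/\ sigma (kk i) = (u i).2, G i (x (kk i)) & f (x (kk i)) + eps <= f (u i).1 + eps].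
Proof. by move=> s4; run_at i => -[_ [_ [_ [_ [_ [_ [/(_ s4) [-> [? [? _]]]]]]]]]]. Qed.

Lemma ubar_in_segment i j : exists2 t, 0 < t < 1 & ubar i j = pcomb (v j) (u i) t.
Proof. by run_at i => -[_ [/(_ j) [[t [t01 ->]] _] _]]; exists t. Qed.

Lemma qq_point_in_epi i j :
  1 <= qq i j <= q /\ E (pcomb (u i) (ubar i j) (qq i j)).
Proof. by run_at i => -[_ [/(_ j) [_ [_ +]] _]]. Qed.

Lemma cut_exists i j : exists a, a \in A i j.
Proof.
run_at i => -[_ [_ [_ [_ [_ [_ [_ [/(_ j) [+ _] _]]]]]]]].
by case: (A i j) => [|a s] // _; exists a; rewrite mem_head.
Qed.

Lemma cut_at i j a : a \in A i j ->
  W1 (ubar i j) E a /\ forall p, M i.+1 p -> dotp a (psub p (ubar i j)) <= 0.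
Proof.
move=> aA; run_at i => -[_ [_ [_ [_ [_ [_ [_ [/(_ j) [_ /(_ a aA) aW] [-> _]]]]]]]]].
by split => // p [_]; apply.
Qed.

Section Stalling.
Variable i0 : nat.
Hypothesis stall : forall i, (i0 <= i)%N -> ~ step4 i.

Lemma kk_stall i : (i0 <= i)%N -> kk i = kk i0.
Proof.
elim: i => [|i IH]; first by rewrite leqn0 => /eqP ->.
rewrite leq_eqVlt ltnS => /orP[/eqP <- //|i0i].
by rewrite (kk_stay (stall i0i)) IH.
Qed.

Lemma M_stall_sub i i' : (i0 <= i)%N -> (i <= i')%N -> M i' `<=` M i.
Proof.
move=> i0i; elim: i' => [|i' IH]; first by rewrite leqn0 => /eqP ->.
rewrite leq_eqVlt => /orP[/eqP -> //|ii'] p /M_succ_sub Mp.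
by apply/IH/Mp/stall; rewrite // (leq_trans i0i).
Qed.

Lemma stall_separation : exists2 c, 0 < c & forall i i', (i0 <= i)%N -> (i < i')%N ->
  exists a, pnorm a = 1 /\ c <= dotp a (psub (u i) (u i')).
Proof.
pose j0 : 'I_m := Ordinal m_gt0.
have [r r0 ballE] := interior_pcoord_ball (v_interior j0).
have [B uB] := u_pcoord_bounded.
pose W := B + pnorm (v j0) + 1.
have W0 : 0 < W.
  have := le_trans (normr_ge0 _) (uB 0%N ord0).
  by have := sqrtr_ge0 (dotp (v j0) (v j0)); rewrite /W /pnorm; lra.
have d0 := delta_gt0 (kk i0).
exists (delta (kk i0) / (n.+1%:R * W) * (r / 2)).
  by rewrite !mulr_gt0 ?invr_gt0 ?mulr_gt0 ?ltr0n //; lra.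
move=> i i' i0i ii'.
have [a aA] := cut_exists i j0; have [aW acut] := cut_at aA.
exists a; split; first by case: aW.
have [t t01 ubarE] := ubar_in_segment i j0.
have uvW k : `|pcoord (u i) k - pcoord (v j0) k| <= W.
  apply: le_trans (ler_normB _ _) _; have := uB i k.
  by have := pcoord_le_pnorm (v j0) k; rewrite /W; lra.
have far : delta (kk i0) < pnorm (psub (ubar i j0) (u i)).
  by rewrite ltNge; apply/negP => near; apply: (stall i0i); exists j0; rewrite kk_stall.
have deep := segment_cut_depth r0 ballE aW ubarE t01 W0 uvW (ltW d0) far.
have beyond : dotp a (psub (u i') (ubar i j0)) <= 0.
  by apply/acut/(M_stall_sub _ ii')/u_in_M; rewrite (leq_trans i0i).
by apply: le_trans deep _; move: beyond; rewrite !dotp_psubr; lra.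
Qed.

Lemma stall_absurd : False.
Proof.
have [c c0 sep] := stall_separation; have [B uB] := u_pcoord_bounded.
have rho0 : 0 < c / (2 * n.+1%:R) by rewrite divr_gt0 ?mulr_gt0 ?ltr0n.
have [l1 [l2 [l12 close]]] := bounded_seq_close_pair
  (P := fun l k => pcoord (u (i0 + l)%N) k) rho0 (fun l k => uB _ k).
have l12' : (i0 + l1 < i0 + l2)%N by rewrite ltn_add2l.
have [a [a1 ca]] := sep _ _ (leq_addr l1 i0) l12'.
have close' k : `|pcoord (psub (u (i0 + l1)%N) (u (i0 + l2)%N)) k| <= c / (2 * n.+1%:R).
  by rewrite pcoord_psub ltW ?close.
have := dotp_le_pnorm1 a1 close'.
have -> : n.+1%:R * (c / (2 * n.+1%:R)) = c / 2 :> R.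
  by field; rewrite addrC natr1 pnatr_eq0.
lra.
Qed.

End Stalling.

Lemma step4_infinitely_often i0 : exists2 i, (i0 <= i)%N & step4 i.
Proof.
have [//|none] := pselect (exists2 i, (i0 <= i)%N & step4 i).
by case: (stall_absurd (i0 := i0)) => i i0i s4; apply: none; exists i.
Qed.

Lemma step4_at_level a : exists i, step4 i /\ kk i = kk a.
Proof.
suff reach d a' : step4 (a' + d)%N -> exists i, step4 i /\ kk i = kk a'.
  by have [b ab s4] := step4_infinitely_often a; apply: (reach (b - a)%N); rewrite subnKC.
elim: d a' => [|d IH] a' s4; first by exists a'; rewrite addn0 in s4.
have [s4a|ns4a] := pselect (step4 a'); first by exists a'.
by rewrite -(kk_stay ns4a); apply: IH; rewrite addSnnS.
Qed.

Lemma step4_at_each_level k : exists i, kk i = k /\ step4 i.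
Proof.
elim: k => [|k [i [<- s4]]].
  by have [i [s4 ki]] := step4_at_level 0; exists i; split; rewrite // ki kk0.
by have [i' [s4' ki']] := step4_at_level i.+1; exists i'; split; rewrite // ki' kk_succ.
Qed.

Lemma model_gap_at_step4 i r L : 0 <= L -> `|(u i).1| <= r ->
  (forall y z, `|y| <= r -> `|y - z| <= 1 -> f y <= f z + L * `|y - z|) ->
  step4 i -> q * delta (kk i) <= 1 ->
  f (u i).1 + eps <= (u i).2 + (1 + L) * (q * delta (kk i)).
Proof.
move=> L0 ur f_lip [j ub_near] qd1; set e := q * delta (kk i).
have [/andP[qq1 qqq] Ew] := qq_point_in_epi i j.
set w := pcomb (u i) (ubar i j) (qq i j) in Ew *.
have e0 : 0 <= e := mulr_ge0 (ltW q_gt0) (ltW (delta_gt0 _)).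
have uw k : `|pcoord (u i) k - pcoord w k| <= e.
  have -> : pcoord (u i) k - pcoord w k = - (qq i j * pcoord (psub (ubar i j) (u i)) k).
    by rewrite pcoord_pcomb pcoord_psub; ring.
  rewrite normrN normrM ger0_norm; last lra.
  by rewrite ler_pM ?normr_ge0 //; [lra | exact: le_trans (pcoord_le_pnorm _ _) ub_near].
have uw1 : `|(u i).1 - w.1| <= e.
  apply: mx_norm_le_entries => // k; have := uw (lift ord_max k).
  by rewrite !pcoord_lift !mxE.
have := uw ord_max; rewrite !pcoord_max ler_norml => /andP[uw2 _].
have := f_lip _ _ ur (le_trans uw1 qd1).
have : L * `|(u i).1 - w.1| <= L * e by apply: ler_wpM2l.
have Ew' : f w.1 + eps <= w.2 := Ew.
lra.
Qed.

Hypothesis f_convex : convex_fun f.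

Lemma values_near_gs : exists C, forall k, q * delta k <= 1 ->
  gs <= f (x k) + eps <= gs + C * delta k /\ gs - C * delta k <= sigma k <= gs.
Proof.
have [r ur] := u1_bounded; have [L L0 f_lip] := convex_fun_local_lipschitz f_convex r.
exists ((1 + L) * q) => k qd1; have [i [ki s4]] := step4_at_each_level k; subst k.
have [-> /G_sub_D/gs_le_g gsx gx] := step4_record s4.
have gap := model_gap_at_step4 L0 (ur i) f_lip s4 qd1.
have /andP[_ u2gs] := u2_bounds i; have gsu := gs_le_g (G_sub_D (u1_in_G i)).
rewrite -mulrA; split; apply/andP; split; lra.
Qed.

Lemma values_cvg : delta @ \oo --> 0 ->
  (fun k => f (x k) + eps) @ \oo --> gs /\ sigma @ \oo --> gs.
Proof.
move=> delta0; have [C near_gs] := values_near_gs.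
have small : \forall k \near \oo, q * delta k <= 1.
  near=> k; rewrite -(divff (lt0r_neq0 q_gt0)) (ler_pM2l q_gt0).
  by near: k; apply: (cvgr_le _ delta0); rewrite invr_gt0 q_gt0.
have to_gs b : (fun k => gs + b * delta k) @ \oo --> gs.
  by rewrite -[X in _ --> X]addr0 -(mulr0 b); apply: cvgD; [exact: cvg_cst | exact: cvgMr].
split.
  apply: (squeeze_cvgr _ (cvg_cst gs) (to_gs C)).
  by move: small; apply: filterS => k /near_gs [].
apply: (squeeze_cvgr _ (to_gs (- C)) (cvg_cst gs)).
by move: small; apply: filterS => k /near_gs [_]; rewrite mulNr.
Unshelve. all: by end_near.
Qed.

End Method24.

Unset Implicit Arguments.
Theorem theorem2p4p3 (R : realType) (n : nat)
  (D : set 'rV[R]_n) (f : 'rV[R]_n -> R) (xs : 'rV[R]_n) (eps : R)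
  (m : nat) (v : 'I_m -> pt R n) (q : R)
  (G : nat -> set 'rV[R]_n) (M : nat -> set (pt R n)) (delta : nat -> R)
  (gbar : nat -> R) (u : nat -> pt R n) (ubar : nat -> 'I_m -> pt R n)
  (qq : nat -> 'I_m -> R) (Q : nat -> set (pt R n))
  (A : nat -> 'I_m -> seq (pt R n)) (kk : nat -> nat)
  (x : nat -> 'rV[R]_n) (sigma : nat -> R) :
  closed D -> convex_setR D -> convex_fun f ->
  D xs -> (forall y, D y -> f xs <= f y) ->
  0 < eps -> (0 < m)%N ->
  method24_run D (fun y => f y + eps) (f xs + eps) xs v q G M delta gbar u ubar
    qq Q A kk x sigma ->
  (forall k, 0 < delta k) -> delta @ \oo --> 0 ->
  (forall k, exists i, kk i = k /\
     exists j, pnorm (psub (ubar i j) (u i)) <= delta (kk i)) /\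
  (fun k => f (x k) + eps) @ \oo --> f xs + eps /\
  sigma @ \oo --> f xs + eps.
Proof.
move=> _ _ f_convex _ xs_min _ m_gt0 run delta_gt0 delta0; split.
  exact: step4_at_each_level run delta_gt0 m_gt0.
exact: values_cvg xs_min run delta_gt0 m_gt0 f_convex delta0.
Qed.
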